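(* Let $1\le k\le n$ and let $a_{i,j}\in\mathbb C$ for $0\le i<j\le k$. If $$\sum_{0\le i<j\le k}a_{i,j}\,\mathrm{Tr}_{\{k+1,\dots,n\}}\big(|D_n^i\rangle\langle D_n^j|\big)=0,$$ then $a_{i,j}=0$ for all $0\le i<j\le k$.
   Context: Dicke states: $|D_n^i\rangle=\binom{n}{i}^{-1/2}\sum_{s\in\{0,1\}^n,\ \sum_js_j=i}|s_1\rangle\otimes\cdots\otimes|s_n\rangle$ in $(\mathbb C^2)^{\otimes n}$; $\mathrm{Tr}_{\{k+1,\dots,n\}}$ is the partial trace over qubits $k+1,\dots,n$ (for $k=n$ it is the identity map). *)

From HB Require Import structures.
From mathcomp Require Import all_boot all_order all_algebra.
From mathcomp Require Import reals complex.
Set Implicit Arguments. Unset Strict Implicit. Unset Printing Implicit Defensive.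
Import Order.TTheory GRing.Theory Num.Theory.
Local Open Scope ring_scope.

(* Computational basis of (C^2)^{\otimes n}: bit strings s = (s_1,...,s_n),
   qubit number q (1-based) is index q-1 : 'I_n. *)
Definition bits (n : nat) := {ffun 'I_n -> bool}.

Definition hweight (n : nat) (s : bits n) : nat := (\sum_(j < n) (s j : nat))%N.

Definition dicke (R : realType) (n i : nat) (s : bits n) : R[i] :=
  if hweight s == i then (((Num.sqrt (('C(n, i))%:R : R))^-1)%:C)%C else 0.

(* Operators on (C^2)^{\otimes n}, given by their matrix entries <s|X|t>. *)
Definition op (R : realType) (n : nat) := bits n -> bits n -> R[i].

Definition dicke_outer (R : realType) (n i j : nat) : op R n :=
  fun s t => @dicke R n i s * Num.conj (@dicke R n j t).

(* Partial trace over qubits k+1,...,n (i.e. indices k..n-1), keeping the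
   first k qubits:  <u|Tr X|v> = sum_w <u w| X |v w>. For k = n this is
   the identity map. *)
Definition ptrace (R : realType) (n k : nat) (hk : (k <= n)%N) (X : op R n)
  : op R k :=
  fun u v =>
    \sum_(s : bits n) \sum_(t : bits n |
        [forall j : 'I_k, (s (widen_ord hk j) == u j) && (t (widen_ord hk j) == v j)]
        && [forall q : 'I_n, (k <= q)%N ==> (s q == t q)])
      X s t.

(* Evaluate the vanishing operator at the entry indexed by u_i = 1^i 0^(k-i) and
   u_j = 1^j 0^(k-j). A term s, t of the partial trace of |D_n^i'><D_n^j'| at that
   entry has s, t agreeing on the traced qubits, so their weights are i + r and
   j + r for the common traced weight r: only the pairs (i + r, j + r) contribute,
   and (i, j) itself contributes the nonzero term s = 1^i 0^(n-i), t = 1^j 0^(n-j).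
   Hence the equation at that entry expresses a_(i,j) through the a_(i',j') with
   j' > j, and downward induction on j kills all coefficients. *)
From HB Require Import structures.
From mathcomp Require Import all_boot all_order all_algebra.
From mathcomp Require Import reals complex.
From mathcomp Require Import zify.
Import Order.TTheory GRing.Theory Num.Theory.
Local Open Scope ring_scope.
Set Implicit Arguments. Unset Strict Implicit.

Lemma sum_sum_only (V : nmodType) (I J : finType) (P : I -> J -> bool)
    (F : I -> J -> V) (i0 : I) (j0 : J) :
  P i0 j0 -> (forall i j, P i j -> (i != i0) || (j != j0) -> F i j = 0) ->
  \sum_i \sum_(j | P i j) F i j = F i0 j0.
Proof.
move=> P0 F0; rewrite (bigD1 i0) //= (bigD1 j0) //= !big1 ?addr0 //.
- by move=> i ni0; apply: big1 => j Pij; rewrite F0 ?ni0.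
- by move=> j /andP[Pj nj0]; rewrite F0 ?nj0 ?orbT.
Qed.

Lemma sum_ltn_ord (n i : nat) : (\sum_(q < n) ((q < i)%N : nat))%N = minn i n.
Proof.
elim: n => [|n IH]; first by rewrite big_ord0; lia.
by rewrite big_ord_recr /= IH; case: (ltnP n i) => /=; lia.
Qed.

Definition pref (n m : nat) : bits n := [ffun q : 'I_n => (q < m)%N].

Definition tail_weight (n k : nat) (s : bits n) : nat :=
  (\sum_(q < n | (k <= q)%N) (s q : nat))%N.

Lemma hweight_pref (n m : nat) : (m <= n)%N -> hweight (pref n m) = m.
Proof.
move=> mn; rewrite /hweight (eq_bigr (fun q : 'I_n => ((q < m)%N : nat))).
  by rewrite sum_ltn_ord; lia.
by move=> q _; rewrite ffunE.
Qed.

Lemma eq_tail_weight (n k : nat) (s t : bits n) :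
  (forall q : 'I_n, (k <= q)%N -> s q = t q) -> tail_weight k s = tail_weight k t.
Proof. by move=> st; apply: eq_bigr => q /st ->. Qed.

Section PrefixedBits.

Variables (n k : nat) (hk : (k <= n)%N) (i : nat) (hi : (i <= k)%N) (s : bits n).
Hypothesis s_pref : forall q : 'I_k, s (widen_ord hk q) = (q < i)%N.

Lemma prefixed_bit (q : 'I_n) (qk : (q < k)%N) : s q = (q < i)%N.
Proof. by have := s_pref (Ordinal qk); rewrite (_ : widen_ord _ _ = q) //; apply: val_inj. Qed.

Lemma hweight_prefixed : hweight s = (i + tail_weight k s)%N.
Proof.
rewrite /hweight (bigID (fun q : 'I_n => (q < k)%N)) /=; congr (_ + _)%N.
  rewrite (eq_bigr (fun q : 'I_n => ((q < i)%N : nat))); last first.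
    by move=> q qk; rewrite prefixed_bit.
  rewrite big_mkcond /= (eq_bigr (fun q : 'I_n => ((q < i)%N : nat))).
    by rewrite sum_ltn_ord; lia.
  by move=> q _; case: ifP => // /negbT; rewrite -leqNgt; lia.
by apply: eq_bigl => q; rewrite -leqNgt.
Qed.

Lemma prefixed_eq_pref : hweight s = i -> s = pref n i.
Proof.
rewrite hweight_prefixed => wi; have /eqP : tail_weight k s = 0%N by lia.
rewrite /tail_weight sum_nat_eq0 => /forallP tail0.
apply/ffunP => q; rewrite ffunE; case: (ltnP q k) => qk; first exact: prefixed_bit.
move: (tail0 q); rewrite qk /=; case: (s q) => // _.
by apply/esym/negbTE; rewrite -leqNgt; lia.
Qed.

End PrefixedBits.

Lemma ptrace_index_pref (n k : nat) (hk : (k <= n)%N) (i j : nat) (s t : bits n) :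
  [forall q : 'I_k, (s (widen_ord hk q) == pref k i q) && (t (widen_ord hk q) == pref k j q)]
  && [forall q : 'I_n, (k <= q)%N ==> (s q == t q)] ->
  [/\ (forall q : 'I_k, s (widen_ord hk q) = (q < i)%N),
      (forall q : 'I_k, t (widen_ord hk q) = (q < j)%N) &
      (forall q : 'I_n, (k <= q)%N -> s q = t q)].
Proof.
case/andP => /forallP st /forallP tail; split.
- by move=> q; have /andP[/eqP -> _] := st q; rewrite ffunE.
- by move=> q; have /andP[_ /eqP ->] := st q; rewrite ffunE.
- by move=> q kq; have /implyP /(_ kq) /eqP := tail q.
Qed.

Section DickeOuter.

Variable R : realType.

Lemma dicke_coef_neq0 (n i : nat) : (i <= n)%N ->
  ((Num.sqrt (('C(n, i))%:R : R))^-1)%:C%C != 0 :> R[i].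
Proof.
move=> i_n; apply/negP => /eqP [] /eqP.
by rewrite invr_eq0 sqrtr_eq0 leNgt ltr0n bin_gt0 i_n.
Qed.

Lemma dicke_outer_neq0 (n i j : nat) (s t : bits n) :
  @dicke_outer R n i j s t != 0 -> hweight s = i /\ hweight t = j.
Proof.
rewrite /dicke_outer /dicke.
case: (hweight s =P i) => [ws|_]; last by rewrite mul0r eqxx.
by case: (hweight t =P j) => [wt|_]; last by rewrite conjC0 mulr0 eqxx.
Qed.

Lemma dicke_outer_pref_neq0 (n i j : nat) : (i <= n)%N -> (j <= n)%N ->
  @dicke_outer R n i j (pref n i) (pref n j) != 0.
Proof.
move=> i_n j_n; rewrite /dicke_outer /dicke !hweight_pref // !eqxx.
by rewrite mulf_neq0 ?conjC_eq0 ?dicke_coef_neq0.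
Qed.

Variables (n k : nat) (hk : (k <= n)%N).

Lemma ptrace_dicke_outer_pref_eq0 (i j i' j' : nat) :
  (i <= k)%N -> (j <= k)%N -> (forall r, (i' != i + r)%N || (j' != j + r)%N) ->
  @ptrace R n k hk (@dicke_outer R n i' j') (pref k i) (pref k j) = 0.
Proof.
move=> hi hj not_shift.
apply: big1 => s _; apply: big1 => t /ptrace_index_pref[si tj st].
apply/eqP; apply: contraTT (not_shift (tail_weight k s)) => /dicke_outer_neq0[ws wt].
rewrite negb_or !negbK -ws -wt (hweight_prefixed hi si) (hweight_prefixed hj tj).
by rewrite (eq_tail_weight st) !eqxx.
Qed.

Lemma ptrace_dicke_outer_pref_diag (i j : nat) : (i <= k)%N -> (j <= k)%N ->
  @ptrace R n k hk (@dicke_outer R n i j) (pref k i) (pref k j) != 0.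
Proof.
move=> hi hj; have i_n : (i <= n)%N by lia.
have j_n : (j <= n)%N by lia.
rewrite /ptrace (sum_sum_only (i0 := pref n i) (j0 := pref n j)).
- exact: dicke_outer_pref_neq0.
- apply/andP; split; apply/forallP => q; first by rewrite !ffunE !eqxx.
  by apply/implyP => kq; rewrite !ffunE !ltnNge (leq_trans hi kq) (leq_trans hj kq).
move=> s t /ptrace_index_pref[si tj _] neq; apply/eqP.
apply: contraTT neq.
by case/dicke_outer_neq0 => /(prefixed_eq_pref hi si) -> /(prefixed_eq_pref hj tj) ->;
  rewrite !eqxx.
Qed.

End DickeOuter.

Theorem mainTheorem17 (R : realType) (n k : nat) (hk1 : (1 <= k)%N)
  (hk : (k <= n)%N) (a : nat -> nat -> R[i]) :
  (forall u v : bits k,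
     \sum_(i < k.+1) \sum_(j < k.+1 | (i < j)%N)
        a i j * @ptrace R n k hk (@dicke_outer R n i j) u v = 0) ->
  forall i j : nat, (i < j)%N -> (j <= k)%N -> a i j = 0.
Proof.
move=> H i j; have [d] := ubnP (k - j)%N; elim: d i j => // d IH i j kjd ij jk.
have ik : (i <= k)%N by lia.
have ik1 : (i < k.+1)%N by lia.
have jk1 : (j < k.+1)%N by lia.
have /eqP := H (pref k i) (pref k j).
rewrite (sum_sum_only (i0 := inord i) (j0 := inord j)) ?inordK //.
  rewrite mulf_eq0 (negbTE (ptrace_dicke_outer_pref_diag R hk ik jk)) orbF.
  by move/eqP.
move=> i' j' i'j' neq; have j'k : (j' <= k)%N by rewrite -ltnS.
have [jj'|j'j] := ltnP j j'; first by rewrite (IH i' j') ?mul0r //; lia.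
rewrite ptrace_dicke_outer_pref_eq0 ?mulr0 // => r.
by move: neq; rewrite -!val_eqE /= !inordK //; lia.
Qed.
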